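(* $\Delta[\Delta,\Delta]\Delta+\mathbb F1=\langle A,B\rangle\cap\langle B,C\rangle\cap\langle A,C\rangle$.
   Context: Let $\mathbb F$ be a field and fix a nonzero $q\in\mathbb F$ with $q^4\neq 1$. The universal Askey--Wilson algebra $\Delta$ is the associative $\mathbb F$-algebra with 1 with generators $A,B,C$ subject to the relations that each of $A+\frac{qBC-q^{-1}CB}{q^2-q^{-2}}$, $B+\frac{qCA-q^{-1}AC}{q^2-q^{-2}}$, $C+\frac{qAB-q^{-1}BA}{q^2-q^{-2}}$ is central. $[\Delta,\Delta]={\rm Span}\{uv-vu:u,v\in\Delta\}$, so $\Delta[\Delta,\Delta]\Delta$ is the 2-sided ideal generated by it. For $\mathcal S\subseteq\Delta$, $\langle\mathcal S\rangle$ denotes the $\mathbb F$-subalgebra of $\Delta$ generated by $\mathcal S$. *)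

From HB Require Import structures.
From mathcomp Require Import all_boot all_order all_algebra.
Set Implicit Arguments. Unset Strict Implicit. Unset Printing Implicit Defensive.
Import GRing.Theory.
Local Open Scope ring_scope.

Definition central (F : fieldType) (D : algType F) (z : D) : Prop :=
  forall y : D, z * y = y * z.

Definition AW_rel (F : fieldType) (q : F) (D : algType F) (a b c : D) : Prop :=
  let d := q ^+ 2 - q ^- 2 in
  [/\ central (a + d^-1 *: (q *: (b * c) - q^-1 *: (c * b))),
      central (b + d^-1 *: (q *: (c * a) - q^-1 *: (a * c)))
    & central (c + d^-1 *: (q *: (a * b) - q^-1 *: (b * a)))].

Definition alg_hom (F : fieldType) (D R : algType F) (f : D -> R) : Prop :=
  [/\ forall x y, f (x + y) = f x + f y,
      forall x y, f (x * y) = f x * f y,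
      f 1 = 1
    & forall (k : F) x, f (k *: x) = k *: f x].

Definition is_universal_AW (F : fieldType) (q : F) (D : algType F) (A B C : D)
  : Prop :=
  AW_rel q A B C /\
  forall (R : algType F) (a b c : R), AW_rel q a b c ->
    (exists f : D -> R, alg_hom f /\ f A = a /\ f B = b /\ f C = c) /\
    (forall f g : D -> R, alg_hom f -> alg_hom g ->
       f A = g A -> f B = g B -> f C = g C -> forall x, f x = g x).

Inductive gen2 (F : fieldType) (D : algType F) (u v : D) : D -> Prop :=
  | gen2_l : gen2 u v u
  | gen2_r : gen2 u v v
  | gen2_1 : gen2 u v 1
  | gen2_add x y : gen2 u v x -> gen2 u v y -> gen2 u v (x + y)
  | gen2_mul x y : gen2 u v x -> gen2 u v y -> gen2 u v (x * y)
  | gen2_scale (k : F) x : gen2 u v x -> gen2 u v (k *: x).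

Inductive comm_ideal (F : fieldType) (D : algType F) : D -> Prop :=
  | ci_comm u v : comm_ideal (u * v - v * u)
  | ci_0 : comm_ideal 0
  | ci_add x y : comm_ideal x -> comm_ideal y -> comm_ideal (x + y)
  | ci_scale (k : F) x : comm_ideal x -> comm_ideal (k *: x)
  | ci_mull z x : comm_ideal x -> comm_ideal (z * x)
  | ci_mulr z x : comm_ideal x -> comm_ideal (x * z).

(* Write d = q^2 - q^-2, E = q AB - q^-1 BA and gamma = C + d^-1 E, which is central.
   Let I be the ideal of <A,B> generated by [A,B].  Centrality of
   alpha = A + d^-1 (q BC - q^-1 CB), after substituting C = gamma - d^-1 E, puts
   gamma [A,B] in I; hence I is stable under multiplication by C, so it is an ideal of
   Delta (which is generated by A, B, C) containing all commutators.  Thus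
   Delta[Delta,Delta]Delta lies in <A,B>, and in <B,C>, <C,A> by cyclic symmetry.
   Conversely, in the commutative quotient Delta / Delta[Delta,Delta]Delta an element
   of <A,B> /\ <B,C> /\ <A,C> has the same image under the homomorphisms sending
   (A,B,C) to (A,B,0), (A,0,0) and (0,0,0), and the last one lands in the scalars. *)

From HB Require Import structures.
From mathcomp Require Import all_boot all_order all_algebra.
From mathcomp Require Import generic_quotient ring_quotient.
From Stdlib Require Import ClassicalEpsilon.
Set Implicit Arguments. Unset Strict Implicit. Unset Printing Implicit Defensive.
Import GRing.Theory.
Local Open Scope ring_scope.
Local Open Scope quotient_scope.

Definition decide_pred (T : Type) (P : T -> Prop) : pred T :=
  fun x => if excluded_middle_informative (P x) then true else false.

Lemma decide_predP (T : Type) (P : T -> Prop) x : reflect (P x) (decide_pred P x).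
Proof. by rewrite /decide_pred; case: excluded_middle_informative; constructor. Qed.

Section AlgHom.
Variables (F : fieldType) (D R S : algType F).

Lemma alg_hom_id : alg_hom (@id D).
Proof. by []. Qed.

Lemma alg_hom_comp (f : D -> R) (g : R -> S) :
  alg_hom f -> alg_hom g -> alg_hom (g \o f).
Proof.
case=> fD fM f1 fZ [gD gM g1 gZ].
by split=> [x y|x y||k x] /=; rewrite ?fD ?fM ?f1 ?fZ ?gD ?gM ?g1 ?gZ.
Qed.

Variables (f : D -> R) (hf : alg_hom f).

Lemma alg_hom0 : f 0 = 0.
Proof. by case: hf => _ _ _ fZ; rewrite -(scale0r 0) fZ scale0r. Qed.

Lemma alg_homB x y : f (x - y) = f x - f y.
Proof. by case: hf => fD _ _ fZ; rewrite fD -scaleN1r fZ scaleN1r. Qed.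

Lemma alg_hom_scalar (k : F) : f k%:A = k%:A.
Proof. by case: hf => _ _ f1 fZ; rewrite fZ f1. Qed.

Lemma alg_hom_eq_gen2 (g : D -> R) (u v x : D) : alg_hom g ->
  f u = g u -> f v = g v -> gen2 u v x -> f x = g x.
Proof.
case: hf => fD fM f1 fZ [gD gM g1 gZ] eu ev.
by elim=> {x} [|||x y _ ex _ ey|x y _ ex _ ey|k x _ ex];
  rewrite ?fD ?gD ?fM ?gM ?fZ ?gZ ?f1 ?g1 ?ex ?ey.
Qed.

Lemma alg_hom_comm_ideal : (forall u v : R, u * v = v * u) ->
  forall x, comm_ideal x -> f x = 0.
Proof.
case: (hf) => fD fM _ fZ commR.
move=> x; elim=> {x} [u v||x y _ ex _ ey|k x _ ex|z x _ ex|z x _ ex].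
- by rewrite alg_homB !fM commR subrr.
- exact: alg_hom0.
- by rewrite fD ex ey addr0.
- by rewrite fZ ex scaler0.
- by rewrite fM ex mulr0.
- by rewrite fM ex mul0r.
Qed.

End AlgHom.

Section Bracket.
Variables (F : fieldType) (D : algType F).
Implicit Types x y z : D.

Definition bracket x y := x * y - y * x.

Lemma bracketxx x : bracket x x = 0.
Proof. exact: subrr. Qed.

Lemma bracketC x y : bracket y x = - bracket x y.
Proof. by rewrite /bracket opprB. Qed.

Lemma bracketx1 x : bracket x 1 = 0.
Proof. by rewrite /bracket mul1r mulr1 subrr. Qed.

Lemma bracketDl x y z : bracket (x + y) z = bracket x z + bracket y z.
Proof. by rewrite /bracket mulrDl mulrDr opprD addrACA. Qed.

Lemma bracketDr x y z : bracket x (y + z) = bracket x y + bracket x z.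
Proof. by rewrite /bracket mulrDl mulrDr opprD addrACA. Qed.

Lemma bracketZl (k : F) x y : bracket (k *: x) y = k *: bracket x y.
Proof. by rewrite /bracket -scalerAl -scalerAr scalerBr. Qed.

Lemma bracketZr (k : F) x y : bracket x (k *: y) = k *: bracket x y.
Proof. by rewrite bracketC bracketZl bracketC scalerN opprK. Qed.

Lemma bracketBl x y z : bracket (x - y) z = bracket x z - bracket y z.
Proof. by rewrite bracketDl -scaleN1r bracketZl scaleN1r. Qed.

Lemma bracketBr x y z : bracket x (y - z) = bracket x y - bracket x z.
Proof. by rewrite bracketDr -scaleN1r bracketZr scaleN1r. Qed.

Lemma bracketMl x y z : bracket (x * y) z = x * bracket y z + bracket x z * y.
Proof. by rewrite /bracket mulrBr mulrBl !mulrA addrA addrNK. Qed.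

Lemma bracketMr x y z : bracket x (y * z) = bracket x y * z + y * bracket x z.
Proof. by rewrite /bracket mulrBr mulrBl !mulrA addrA addrNK. Qed.

End Bracket.

Lemma gen2_sym (F : fieldType) (D : algType F) (u v x : D) :
  gen2 u v x -> gen2 v u x.
Proof. by elim=> *; constructor. Qed.

Lemma gen2_scalar (F : fieldType) (D : algType F) (u v : D) (k : F) :
  gen2 u v k%:A.
Proof. exact/gen2_scale/gen2_1. Qed.

Lemma AW_rel_comm (F : fieldType) (q : F) (R : algType F) (a b c : R) :
  (forall u v : R, u * v = v * u) -> AW_rel q a b c.
Proof. by move=> commR; split=> y; apply: commR. Qed.

Lemma universal_AW_rot (F : fieldType) (q : F) (D : algType F) (A B C : D) :
  is_universal_AW q A B C -> is_universal_AW q B C A.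
Proof.
case=> -[hA hB hC] univ; split; first by split.
move=> R a b c [ha hb hc].
have [[f [hf [fA [fB fC]]]] uniq] := univ R c a b (And3 hc ha hb).
by split=> [|g h hg hh gB gC gA]; [exists f | apply: uniq].
Qed.

Section UniversalInduction.
Variables (F : fieldType) (q : F) (D : algType F) (A B C : D).
Hypothesis univ : is_universal_AW q A B C.
Variable P : D -> Prop.
Hypotheses (PA : P A) (PB : P B) (PC : P C) (P1 : P 1).
Hypothesis PD : forall x y, P x -> P y -> P (x + y).
Hypothesis PM : forall x y, P x -> P y -> P (x * y).
Hypothesis PZ : forall (k : F) x, P x -> P (k *: x).

Let Pb := decide_pred P.

Let Pb_closed : GRing.subsemialg_closed Pb.
Proof.
split; first exact/decide_predP.
- split; first by apply/decide_predP; rewrite -(scale0r 1); apply: PZ.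
  by move=> x y /decide_predP Px /decide_predP Py; apply/decide_predP/PD.
- by move=> k x /decide_predP Px; apply/decide_predP/PZ.
- by move=> x y /decide_predP Px /decide_predP Py; apply/decide_predP/PM.
Qed.

Record subP := SubP { subP_val : D; _ : Pb subP_val }.
HB.instance Definition _ := [isSub for subP_val].
HB.instance Definition _ := [Choice of subP by <:].
HB.instance Definition _ := GRing.SubChoice_isSubAlgebra.Build F D Pb subP Pb_closed.

(* The P-elements form a subalgebra; by universality its inclusion has a section
   fixing A, B and C, so every element is in it. *)
Lemma universal_AW_ind x : P x.
Proof.
have [A' B' C'] : [/\ Pb A, Pb B & Pb C] by split; apply/decide_predP.
pose a := SubP A'; pose b := SubP B'; pose c := SubP C'.
have [[hA hB hC] univR] := univ.
have AWabc : AW_rel q a b c.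
  by split=> y; apply: val_inj; rewrite /= !(rmorphD, rmorphB, rmorphM, linearZ) /= scalerN;
    [apply: hA | apply: hB | apply: hC].
have [[f [hf [fA [fB fC]]]] _] := univR subP a b c AWabc.
have val_hom : alg_hom (val : subP -> D).
  by split=> [u v|u v||k u]; rewrite ?rmorphD ?rmorphM ?rmorph1 ?linearZ.
have [_ uniq] := univR D A B C (And3 hA hB hC).
have <- : val (f x) = x.
  by apply: (uniq _ _ (alg_hom_comp hf val_hom) (alg_hom_id D)); rewrite /= ?fA ?fB ?fC.
exact/decide_predP/valP.
Qed.

End UniversalInduction.

Section BracketIdeal.
Variables (F : fieldType) (D : algType F) (u v : D).

Inductive bracket_ideal : D -> Prop :=
  | bracket_ideal_gen : bracket_ideal (bracket u v)
  | bracket_ideal0 : bracket_ideal 0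
  | bracket_idealD x y : bracket_ideal x -> bracket_ideal y -> bracket_ideal (x + y)
  | bracket_idealZ (k : F) x : bracket_ideal x -> bracket_ideal (k *: x)
  | bracket_idealMl s x : gen2 u v s -> bracket_ideal x -> bracket_ideal (s * x)
  | bracket_idealMr s x : gen2 u v s -> bracket_ideal x -> bracket_ideal (x * s).

Lemma bracket_idealN x : bracket_ideal x -> bracket_ideal (- x).
Proof. by rewrite -scaleN1r; apply: bracket_idealZ. Qed.

Lemma bracket_idealB x y : bracket_ideal x -> bracket_ideal y -> bracket_ideal (x - y).
Proof. by move=> Ix Iy; apply/bracket_idealD/bracket_idealN. Qed.

Lemma bracket_ideal_gen2 x : bracket_ideal x -> gen2 u v x.
Proof.
elim=> {x} [|||k x _ Sx|s x Ss _ Sx|s x Ss _ Sx]; try by constructor.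
- by rewrite /bracket -scaleN1r; apply/gen2_add/gen2_scale; apply: gen2_mul; constructor.
- by rewrite -(scale0r 1); apply/gen2_scale/gen2_1.
Qed.

Lemma bracket_ideal_bracketr s : bracket_ideal (bracket s u) ->
  bracket_ideal (bracket s v) -> forall t, gen2 u v t -> bracket_ideal (bracket s t).
Proof.
move=> Isu Isv t; elim=> {t} // [|t1 t2 _ I1 _ I2|t1 t2 S1 I1 S2 I2|k t _ It].
- by rewrite bracketx1; apply: bracket_ideal0.
- by rewrite bracketDr; apply: bracket_idealD.
- by rewrite bracketMr; apply: bracket_idealD;
    [apply: bracket_idealMr | apply: bracket_idealMl].
- by rewrite bracketZr; apply: bracket_idealZ.
Qed.

Lemma bracket_ideal_bracket s t : gen2 u v s -> gen2 u v t ->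
  bracket_ideal (bracket s t).
Proof.
have Iuu : bracket_ideal (bracket u u) by rewrite bracketxx; apply: bracket_ideal0.
have Ivv : bracket_ideal (bracket v v) by rewrite bracketxx; apply: bracket_ideal0.
have Ivu : bracket_ideal (bracket v u).
  by rewrite bracketC; apply/bracket_idealN/bracket_ideal_gen.
move=> Ss; apply: bracket_ideal_bracketr; rewrite bracketC; apply: bracket_idealN.
- exact: bracket_ideal_bracketr Iuu (bracket_ideal_gen) _ Ss.
- exact: bracket_ideal_bracketr Ivu Ivv _ Ss.
Qed.

End BracketIdeal.

Lemma scale_sub_scale_sub (F : fieldType) (V : lmodType F) (a b e : F) (X P R : V) :
  a *: (X - e *: P) - b *: (X - e *: R) = (a - b) *: X - e *: (a *: P - b *: R).
Proof.
rewrite !scalerBr !scalerA scalerBl [e * a]mulrC [e * b]mulrC !opprB addrACA.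
by rewrite [- _ - _]addrC addrACA.
Qed.

Section AWIdeal.
Variables (F : fieldType) (q : F) (D : algType F) (A B C : D).
Hypotheses (q_neq0 : q != 0) (q4_neq1 : q ^+ 4 != 1).
Hypothesis univ : is_universal_AW q A B C.

Let d := q ^+ 2 - q ^- 2.
Let E := q *: (A * B) - q^-1 *: (B * A).
Let gamma := C + d^-1 *: E.
Let I := bracket_ideal A B.

Let d_neq0 : d != 0.
Proof.
apply: contra q4_neq1 => /eqP/subr0_eq q2E.
by rewrite (exprM q 2 2) expr2 {1}q2E mulVf ?expf_neq0.
Qed.

Let qsubV_neq0 : q - q^-1 != 0.
Proof.
apply: contra q4_neq1 => /eqP/subr0_eq qE.
have q2E : q ^+ 2 = 1 by rewrite expr2 {1}qE mulVf.
by rewrite (exprM q 2 2) q2E expr1n.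
Qed.

Let E_gen2 : gen2 A B E.
Proof.
by rewrite /E -scaleN1r scalerA; apply: gen2_add; apply/gen2_scale/gen2_mul; constructor.
Qed.

Let gamma_central y : gamma * y = y * gamma.
Proof. by case: univ => -[_ _ hC] _; apply: hC. Qed.

Let C_def : C = gamma - d^-1 *: E.
Proof. by rewrite addrK. Qed.

Let gamma_bracket : I (gamma * bracket A B).
Proof.
have [[hA _ _] _] := univ.
have eBC : B * C = gamma * B - d^-1 *: (B * E).
  by rewrite C_def mulrBr -gamma_central scalerAr.
have eCB : C * B = gamma * B - d^-1 *: (E * B).
  by rewrite C_def mulrBl scalerAl.
(* [alpha, A] = 0 becomes (q - q^-1) [gamma B, A] = d^-1 (q [BE, A] - q^-1 [EB, A]). *)
have /eqP := hA A; rewrite -subr_eq0 -/(bracket _ A) eBC eCB scale_sub_scale_sub.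
rewrite bracketDl bracketxx add0r !(bracketZl, bracketBl).
rewrite scaler_eq0 invr_eq0 (negbTE d_neq0) /= subr_eq0 => /eqP key.
have -> : gamma * bracket A B
    = - ((q - q^-1)^-1 *: ((q - q^-1) *: bracket (gamma * B) A)).
  rewrite scalerA mulVf // scale1r bracketMl [bracket gamma A]/bracket.
  by rewrite (gamma_central A) subrr mul0r addr0 (bracketC A B) mulrN opprK.
have [BE_gen2 EB_gen2] : gen2 A B (B * E) /\ gen2 A B (E * B).
  by split; apply: gen2_mul => //; constructor.
have A_gen2 : gen2 A B A by constructor.
rewrite key; apply/bracket_idealN/bracket_idealZ/bracket_idealZ.
by apply: bracket_idealB; apply/bracket_idealZ/bracket_ideal_bracket.
Qed.

Let gamma_mul_ideal x : I x -> I (gamma * x).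
Proof.
elim=> {x} [|||k x _ Ix|s x Ss _ Ix|s x Ss _ Ix].
- exact: gamma_bracket.
- by rewrite mulr0; apply: bracket_ideal0.
- by move=> x y _ Ix _ Iy; rewrite mulrDr; apply: bracket_idealD.
- by rewrite -scalerAr; apply: bracket_idealZ.
- by rewrite mulrA gamma_central -mulrA; apply: bracket_idealMl.
- by rewrite mulrA; apply: bracket_idealMr.
Qed.

Lemma AW_bracket_idealMl y x : I x -> I (y * x).
Proof.
move: y x; apply: (universal_AW_ind univ) => [||||y z Iy Iz|y z Iy Iz|k y Iy] x Ix.
- by apply: bracket_idealMl => //; constructor.
- by apply: bracket_idealMl => //; constructor.
- rewrite C_def mulrBl -scalerAl; apply: bracket_idealB; first exact: gamma_mul_ideal.
  exact/bracket_idealZ/bracket_idealMl.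
- by rewrite mul1r.
- by rewrite mulrDl; apply: bracket_idealD; [apply: Iy | apply: Iz].
- by rewrite -mulrA; apply/Iy/Iz.
- by rewrite -scalerAl; apply/bracket_idealZ/Iy.
Qed.

Lemma AW_bracket_idealMr y x : I x -> I (x * y).
Proof.
move: y x; apply: (universal_AW_ind univ) => [||||y z Iy Iz|y z Iy Iz|k y Iy] x Ix.
- by apply: bracket_idealMr => //; constructor.
- by apply: bracket_idealMr => //; constructor.
- rewrite C_def mulrBr -gamma_central -scalerAr.
  apply: bracket_idealB; first exact: gamma_mul_ideal.
  exact/bracket_idealZ/bracket_idealMr.
- by rewrite mulr1.
- by rewrite mulrDr; apply: bracket_idealD; [apply: Iy | apply: Iz].
- by rewrite mulrA; apply/Iz/Iy.
- by rewrite -scalerAr; apply/bracket_idealZ/Iy.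
Qed.

Let bracket_ideal_bracketr x : I (bracket x A) -> I (bracket x B) ->
  I (bracket x C) -> forall y, I (bracket x y).
Proof.
move=> IA IB IC; apply: (universal_AW_ind univ) => // [|y z Iy Iz|y z Iy Iz|k y Iy].
- by rewrite bracketx1; apply: bracket_ideal0.
- by rewrite bracketDr; apply: bracket_idealD.
- by rewrite bracketMr; apply: bracket_idealD;
    [apply: AW_bracket_idealMr | apply: AW_bracket_idealMl].
- by rewrite bracketZr; apply: bracket_idealZ.
Qed.

Let bracket_ideal_gen2l g y : gen2 A B g -> I (bracket g y).
Proof.
move=> Sg; have [SA SB] : gen2 A B A /\ gen2 A B B by split; constructor.
apply: bracket_ideal_bracketr; try exact: bracket_ideal_bracket.
rewrite C_def bracketBr bracketZr /bracket gamma_central subrr sub0r.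
exact/bracket_idealN/bracket_idealZ/bracket_ideal_bracket.
Qed.

Let bracket_idealCl y : I (bracket C y).
Proof.
have [SA SB] : gen2 A B A /\ gen2 A B B by split; constructor.
apply: bracket_ideal_bracketr; last by rewrite bracketxx; apply: bracket_ideal0.
all: by rewrite bracketC; apply/bracket_idealN/bracket_ideal_gen2l.
Qed.

Lemma AW_bracket_ideal_bracket x y : I (bracket x y).
Proof.
have [SA SB] : gen2 A B A /\ gen2 A B B by split; constructor.
apply: bracket_ideal_bracketr; rewrite bracketC; apply: bracket_idealN.
- exact: bracket_ideal_gen2l.
- exact: bracket_ideal_gen2l.
- exact: bracket_idealCl.
Qed.

Lemma comm_ideal_gen2 x : comm_ideal x -> gen2 A B x.
Proof.
move=> Kx; apply: bracket_ideal_gen2.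
elim: Kx => {x} [u v||x y _ Ix _ Iy|k x _ Ix|z x _ Ix|z x _ Ix].
- exact: AW_bracket_ideal_bracket.
- exact: bracket_ideal0.
- exact: bracket_idealD.
- exact: bracket_idealZ.
- exact: AW_bracket_idealMl.
- exact: AW_bracket_idealMr.
Qed.

End AWIdeal.

Lemma universal_AW_hom_comm (F : fieldType) (q : F) (D R : algType F) (A B C : D)
    (a b c : R) :
  is_universal_AW q A B C -> (forall u v : R, u * v = v * u) ->
  exists f : D -> R, alg_hom f /\ f A = a /\ f B = b /\ f C = c.
Proof. by case=> _ univR commR; case: (univR R a b c (AW_rel_comm q a b c commR)). Qed.

Lemma universal_AW_comm_ideal1 (F : fieldType) (q : F) (D : algType F) (A B C : D) :
  is_universal_AW q A B C -> ~ comm_ideal (1 : D).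
Proof.
move=> univ K1; have commF (u v : F^o) : u * v = v * u by apply: mulrC.
have [f [hf _]] := universal_AW_hom_comm 0 0 0 univ commF.
by have := alg_hom_comm_ideal hf commF K1; case: hf => _ _ -> _ /eqP; rewrite oner_eq0.
Qed.

Section Abelianization.
Variables (F : fieldType) (D : algType F).
(* An algType is a nontrivial ring, so the quotient needs a proper ideal. *)
Hypothesis comm_ideal1 : ~ comm_ideal (1 : D).

Definition comm_ideal_pred : {pred D} := decide_pred (@comm_ideal F D).

Let comm_ideal_predP x : reflect (comm_ideal x) (x \in comm_ideal_pred).
Proof. exact: decide_predP. Qed.

Let comm_ideal_zmod_closed : zmod_closed comm_ideal_pred.
Proof.
split; first exact/comm_ideal_predP/ci_0.
move=> x y /comm_ideal_predP Kx /comm_ideal_predP Ky; apply/comm_ideal_predP/ci_add => //.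
by rewrite -scaleN1r; apply: ci_scale.
Qed.

HB.instance Definition _ :=
  GRing.isZmodClosed.Build D comm_ideal_pred comm_ideal_zmod_closed.

Definition abel := Quotient.quot comm_ideal_pred.
HB.instance Definition _ : EqQuotient D (Quotient.equiv comm_ideal_pred) abel :=
  EqQuotient.on abel.
HB.instance Definition _ := Choice.on abel.
HB.instance Definition _ := GRing.Zmodule.on abel.
HB.instance Definition _ := ZmodQuotient.on abel.

Lemma abel_eqE x y : (x == y %[mod abel]) = (x - y \in comm_ideal_pred).
Proof. by rewrite -Quotient.idealrBE. Qed.

Let comm_ideal_sub_repr x : comm_ideal (x - repr (\pi_abel x)).
Proof. by apply/comm_ideal_predP; rewrite -abel_eqE reprK. Qed.

Let abel_one : abel := lift_cst abel 1.
Let abel_mul := lift_op2 abel *%R.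
Let abel_scale (k : F) := lift_op1 abel ( *:%R k).

Canonical pi_abel_one := PiConst abel_one.

Let pi_abel_mul : {morph \pi_abel : x y / x * y >-> abel_mul x y}.
Proof.
move=> x y; unlock abel_mul; apply/eqP; rewrite abel_eqE; apply/comm_ideal_predP.
have Kx := comm_ideal_sub_repr x; have Ky := comm_ideal_sub_repr y.
set x' := repr _ in Kx *; set y' := repr _ in Ky *.
rewrite (_ : x * y - x' * y' = (x - x') * y + x' * (y - y')).
  by apply: ci_add; [apply: ci_mulr | apply: ci_mull].
by rewrite mulrBl mulrBr addrA addrNK.
Qed.
Canonical pi_abel_mul_morph := PiMorph2 pi_abel_mul.

Let pi_abel_scale k : {morph \pi_abel : x / k *: x >-> abel_scale k x}.
Proof.
move=> x; unlock abel_scale; apply/eqP; rewrite abel_eqE; apply/comm_ideal_predP.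
by rewrite -scalerBr; apply/ci_scale/comm_ideal_sub_repr.
Qed.
Canonical pi_abel_scale_morph k := PiMorph1 (pi_abel_scale k).

Let abel_mulA : associative abel_mul.
Proof. by move=> x y z; rewrite -[x]reprK -[y]reprK -[z]reprK !piE mulrA. Qed.

Let abel_mulC : commutative abel_mul.
Proof.
move=> x y; rewrite -[x]reprK -[y]reprK !piE; apply/eqP; rewrite abel_eqE.
exact/comm_ideal_predP/ci_comm.
Qed.

Let abel_mul1 : left_id abel_one abel_mul.
Proof. by move=> x; rewrite -[x]reprK !piE mul1r. Qed.

Let abel_mulDl : left_distributive abel_mul +%R.
Proof. by move=> x y z; rewrite -[x]reprK -[y]reprK -[z]reprK !piE mulrDl. Qed.

Let abel_one_neq0 : abel_one != 0.
Proof. by rewrite piE Quotient.equivE subr0; apply/comm_ideal_predP. Qed.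

HB.instance Definition _ := GRing.Zmodule_isComNzRing.Build abel
  abel_mulA abel_mulC abel_mul1 abel_mulDl abel_one_neq0.

Let abel_scaleA a b x : abel_scale a (abel_scale b x) = abel_scale (a * b) x.
Proof. by rewrite -[x]reprK !piE scalerA. Qed.

Let abel_scale1 : left_id 1 abel_scale.
Proof. by move=> x; rewrite -[x]reprK !piE scale1r. Qed.

Let abel_scaleDr : right_distributive abel_scale +%R.
Proof. by move=> a x y; rewrite -[x]reprK -[y]reprK !piE scalerDr. Qed.

Let abel_scaleDl x : {morph abel_scale^~ x : a b / a + b}.
Proof. by move=> a b; rewrite -[x]reprK !piE scalerDl. Qed.

HB.instance Definition _ := GRing.Zmodule_isLmodule.Build F abel
  abel_scaleA abel_scale1 abel_scaleDr abel_scaleDl.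

Let abel_scaleAl a x y : abel_scale a (abel_mul x y) = abel_mul (abel_scale a x) y.
Proof. by rewrite -[x]reprK -[y]reprK !piE scalerAl. Qed.

HB.instance Definition _ := GRing.Lmodule_isLalgebra.Build F abel abel_scaleAl.
HB.instance Definition _ := GRing.Lalgebra_isComAlgebra.Build F abel.

Lemma pi_abel_hom : alg_hom (\pi_abel : D -> abel).
Proof.
split=> [x y|x y||k x]; [exact: pi_addr | exact: pi_abel_mul | | exact: pi_abel_scale].
by rewrite /GRing.one /= /abel_one -lock.
Qed.

Lemma pi_abel_eq x y : \pi_abel x = \pi_abel y -> comm_ideal (x - y).
Proof. by move/eqP; rewrite abel_eqE => /comm_ideal_predP. Qed.

Variables (q : F) (A B C : D).
Hypothesis univ : is_universal_AW q A B C.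

Lemma gen2_cap_comm_ideal_scalar x : gen2 A B x -> gen2 B C x -> gen2 A C x ->
  exists k : F, comm_ideal (x - k%:A).
Proof.
move=> SAB SBC SAC.
have commQ (u v : abel) : u * v = v * u by apply: mulrC.
have commF (u v : F^o) : u * v = v * u by apply: mulrC.
have [f1 [hf1 [f1A [f1B f1C]]]] :=
  universal_AW_hom_comm (\pi_abel A) (\pi_abel B) 0 univ commQ.
have [f2 [hf2 [f2A [f2B f2C]]]] := universal_AW_hom_comm (\pi_abel A) 0 0 univ commQ.
have [f3 [hf3 [f3A [f3B f3C]]]] := universal_AW_hom_comm 0 0 0 univ commQ.
have [eps [heps [eA [eB eC]]]] := universal_AW_hom_comm 0 0 0 univ commF.
have hscalar : alg_hom (fun k : F^o => k%:A : abel).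
  by split=> [a b|a b||k a]; rewrite /= ?scalerDl ?scale1r ?scalerA // -scalerAl mul1r scalerA.
exists (eps x); apply: pi_abel_eq; rewrite (alg_hom_scalar pi_abel_hom).
have -> : \pi_abel x = f1 x by apply: (alg_hom_eq_gen2 pi_abel_hom hf1) SAB; rewrite ?f1A ?f1B.
have -> : f1 x = f2 x.
  by apply: (alg_hom_eq_gen2 hf1 hf2) SAC; rewrite ?f1A ?f2A ?f1C ?f2C.
have -> : f2 x = f3 x.
  by apply: (alg_hom_eq_gen2 hf2 hf3) SBC; rewrite ?f2B ?f3B ?f2C ?f3C.
have [_ univR] := univ; have [_ uniq] := univR abel 0 0 0 (AW_rel_comm q 0 0 0 commQ).
apply: (uniq _ _ hf3 (alg_hom_comp heps hscalar));
  by rewrite /= ?f3A ?f3B ?f3C ?eA ?eB ?eC scale0r.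
Qed.

End Abelianization.

Theorem theorem11p15 (F : fieldType) (q : F) (D : algType F) (A B C : D) :
  q != 0 -> q ^+ 4 != 1 -> is_universal_AW q A B C ->
  forall x : D,
    (exists (i : D) (k : F), comm_ideal i /\ x = i + k%:A) <->
    (gen2 A B x /\ gen2 B C x /\ gen2 A C x).
Proof.
move=> q_neq0 q4_neq1 univ x; have univBCA := universal_AW_rot univ.
have univCAB := universal_AW_rot univBCA.
split=> [[i [k [Ki ->]]] | [SAB [SBC SAC]]].
- split; [|split]; apply: gen2_add _ (gen2_scalar _ _ k).
  + exact: (comm_ideal_gen2 q_neq0 q4_neq1 univ Ki).
  + exact: (comm_ideal_gen2 q_neq0 q4_neq1 univBCA Ki).
  + exact: (gen2_sym (comm_ideal_gen2 q_neq0 q4_neq1 univCAB Ki)).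
- have K1 := universal_AW_comm_ideal1 univ.
  have [k Kx] := gen2_cap_comm_ideal_scalar K1 univ SAB SBC SAC.
  by exists (x - k%:A), k; rewrite subrK.
Qed.
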